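(* Let $A$ be a bounded distributive lattice with Priestley space $X$, and let $S\subseteq A$ be such that $\bigvee_A S$ exists. Then $\bigvee_A S$ is distributive if and only if $\mathfrak s(\bigvee_A S)={\sf cl}\bigcup_{s\in S}\mathfrak s(s)$.
   Context: A join $\bigvee_A S$ is distributive if $a\wedge\bigvee_A S=\bigvee_A\{a\wedge s:s\in S\}$ for all $a\in A$. The Priestley space $X$ of $A$ is the set of prime filters of $A$ ordered by inclusion, with topology generated by the basis $\{\mathfrak s(a)\setminus\mathfrak s(b):a,b\in A\}$, where $\mathfrak s(a)=\{x\in X:a\in x\}$; ${\sf cl}$ denotes topological closure in $X$. *)

From HB Require Import structures.
From mathcomp Require Import all_boot all_order.
From mathcomp Require Import boolp classical_sets.
Set Implicit Arguments. Unset Strict Implicit. Unset Printing Implicit Defensive.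

Local Open Scope classical_set_scope.

Section Priestley.
Context {disp : Order.disp_t} {A : tbDistrLatticeType disp}.

Definition prime_filter (x : set A) : Prop :=
  [/\ x (Order.top : A), ~ x (Order.bottom : A),
      (forall a b : A, x a -> (a <= b)%O -> x b),
      (forall a b : A, x a -> x b -> x (Order.meet a b)) &
      (forall a b : A, x (Order.join a b) -> x a \/ x b)].

Definition pspace := {x : set A | prime_filter x}.

Definition sfrak (a : A) : set pspace := [set x | proj1_sig x a].

Definition basic_open (U : set pspace) : Prop :=
  exists a b : A, U = sfrak a `\` sfrak b.

Definition popen (U : set pspace) : Prop :=
  forall x, U x -> exists B, basic_open B /\ B x /\ B `<=` U.

Definition pclosure (Y : set pspace) : set pspace :=
  [set x | forall U, popen U -> U x -> U `&` Y !=set0].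

Definition is_join (S : set A) (j : A) : Prop :=
  (forall s, S s -> (s <= j)%O) /\
  (forall u, (forall s, S s -> (s <= u)%O) -> (j <= u)%O).

Definition distributive_join (S : set A) (j : A) : Prop :=
  forall a : A, is_join [set Order.meet a s | s in S] (Order.meet a j).

End Priestley.

(* Separating prime filters make the Stone map [sfrak] an order embedding,
   so a basic open [sfrak a \ sfrak b] meets [U_(s in S) sfrak s] exactly
   when [a /\ s <= b] fails for some [s] in [S].  Hence [sfrak j] lies in the
   closure of that union iff [a /\ j <= b] whenever [a /\ s <= b] for all
   [s], which is the distributivity of [j]; the reverse inclusion always
   holds because [sfrak j] is closed. *)

From mathcomp Require Import all_boot all_order.
From mathcomp Require Import boolp classical_sets.
Local Open Scope classical_set_scope.
Import Order.TTheory.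
Local Open Scope order_scope.

Section Priestley.
Context {disp : Order.disp_t} {A : tbDistrLatticeType disp}.
Implicit Types (a b p q j : A) (S F M : set A).

Lemma distributive_joinP S j : is_join S j ->
  distributive_join S j <->
  (forall a b, (forall s, S s -> a `&` s <= b) -> a `&` j <= b).
Proof.
move=> [jub _]; split=> [dist a b ab | least a]; last split.
- by apply: (dist a).2 => _ [s Ss <-]; exact: ab.
- by move=> _ [s Ss <-]; rewrite leI2 ?jub.
- by move=> u ub; apply: least => s Ss; apply: ub; exists s.
Qed.

Definition is_filter F :=
  (forall a b, F a -> a <= b -> F b) /\ (forall a b, F a -> F b -> F (a `&` b)).

Lemma filter_bigcup_chain (C : set (set A)) :
  (forall F, C F -> is_filter F) -> total_on C subset ->
  is_filter (\bigcup_(F in C) F).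
Proof.
move=> Cfil Ctot; split.
  by move=> a b [F CF Fa] ab; exists F => //; exact: (Cfil F CF).1 Fa ab.
move=> a b [F CF Fa] [G CG Gb].
have [FG|GF] := Ctot F G CF CG.
- by exists G => //; apply: (Cfil G CG).2 => //; exact: FG.
- by exists F => //; apply: (Cfil F CF).2 => //; exact: GF.
Qed.

Lemma filter_adjoin {M} a : is_filter M ->
  is_filter [set c | exists2 f, M f & f `&` a <= c].
Proof.
move=> [Mup Mmeet]; split.
  by move=> c d [f Mf fc] cd; exists f => //; exact: le_trans cd.
move=> c d [f Mf fc] [g Mg gd]; exists (f `&` g); first exact: Mmeet.
by rewrite lexI; apply/andP; split;
  [apply: le_trans fc | apply: le_trans gd]; rewrite leI2 ?leIl ?leIr.
Qed.

Lemma maximal_filter_prime {M q} : is_filter M -> M !=set0 -> ~ M q ->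
  (forall B, M `<` B -> is_filter B -> B q) -> prime_filter M.
Proof.
move=> Mfil [m Mm] Mq Mmax; have [Mup Mmeet] := Mfil.
have adjoin_le a : ~ M a -> exists2 f, M f & f `&` a <= q.
  move=> Ma; have MsubB : M `<` [set c | exists2 f, M f & f `&` a <= c].
    split; first by move=> c Mc; exists c => //; exact: leIl.
    by move=> aM; apply: Ma; apply: aM; exists m => //; exact: leIr.
  exact: Mmax MsubB (filter_adjoin a Mfil).
split => //.
- exact: Mup Mm (lex1 m).
- by move=> M0; apply: Mq; exact: Mup M0 (le0x q).
move=> a b Mab; apply: contrapT => /not_orP[Ma Mb].
have [f Mf fa] := adjoin_le a Ma; have [g Mg gb] := adjoin_le b Mb.
apply: Mq; apply: Mup (Mmeet _ _ (Mmeet _ _ Mf Mg) Mab) _.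
by rewrite meetUr leUx; apply/andP; split;
  [apply: le_trans fa | apply: le_trans gb]; rewrite leI2 ?leIl ?leIr.
Qed.

Lemma prime_filter_separation p q : ~ p <= q ->
  exists x : @pspace _ A, sfrak p x /\ ~ sfrak q x.
Proof.
move=> npq.
(* The empty set is admitted so that the union of the empty chain qualifies. *)
pose P F := [/\ is_filter F, ~ F q & F = set0 \/ F p].
have [M [[Mfil Mq Mp] Mmax]] : exists M, P M /\ forall B, M `<` B -> ~ P B.
  apply: Zorn_bigcup => C CP Ctot; split.
  - by apply: filter_bigcup_chain => // F /CP[].
  - by move=> [F /CP[_ + _]].
  - have [[F CF Fp]|noFp] := pselect (exists2 F, C F & F p); first by right; exists F.
    left; apply/seteqP; split => // a [F CF Fa].
    have [_ _ [F0|Fp]] := CP F CF; first by rewrite F0 in Fa.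
    by case: noFp; exists F.
have up_p : P [set c | p <= c].
  rewrite /P; split; [|exact: npq|by right=> /=].
  by split=> [a b pa /(le_trans pa) //|a b pa pb /=]; rewrite lexI pa pb.
have {}Mp : M p.
  case: Mp => // M0; exfalso; apply: (Mmax _ _ up_p).
  by rewrite M0; split => // /(_ p (lexx p)).
have Mprime : prime_filter M.
  apply: (maximal_filter_prime Mfil _ Mq); first by exists p.
  move=> B MB Bfil; apply: contrapT => Bq; apply: (Mmax B MB).
  by split => //; right; apply: MB.1.
by exists (exist _ M Mprime).
Qed.

Lemma sfrak_le {a b} : a <= b -> sfrak a `<=` sfrak b.
Proof. by move=> ab [x [? ? xup ? ?]] xa; exact: xup xa ab. Qed.

Lemma sfrakI a b : sfrak (a `&` b) = sfrak a `&` sfrak b.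
Proof.
apply/seteqP; split=> [x xab|[x [? ? ? xmeet ?]] []]; last exact: xmeet.
by split; apply: sfrak_le xab; rewrite ?leIl ?leIr.
Qed.

Lemma sfrak_subsetE a b : (sfrak a `<=` sfrak b) <-> a <= b.
Proof.
split=> [ab|]; last exact: sfrak_le.
apply: contrapT => /prime_filter_separation[x [xa xb]].
by apply: xb; exact: ab.
Qed.

Lemma popen_basic a b : popen (sfrak a `\` sfrak b).
Proof. by move=> x Bx; exists (sfrak a `\` sfrak b); split; [exists a, b|split]. Qed.

Lemma pclosureP (Y : set (@pspace _ A)) x : pclosure Y x <->
  (forall a b, sfrak a x -> ~ sfrak b x -> (sfrak a `\` sfrak b) `&` Y !=set0).
Proof.
split=> [clY a b xa xb | basicY U Uopen Ux].
  exact: clY _ (popen_basic a b) (conj xa xb).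
have [_ [[a [b ->]] [[xa xb] BU]]] := Uopen x Ux.
have [y [By Yy]] := basicY a b xa xb.
by exists y; split => //; exact: BU.
Qed.

Lemma pclosure_sub_sfrak (Y : set (@pspace _ A)) j :
  Y `<=` sfrak j -> pclosure Y `<=` sfrak j.
Proof.
move=> Yj x /pclosureP clY; apply: contrapT => xj.
have [xT _ _ _ _] := proj2_sig x.
have [y [[_ yj] Yy]] := clY \top j xT xj.
by apply: yj; exact: Yj.
Qed.

Lemma basic_meets_bigcup_sfrak S a b :
  (sfrak a `\` sfrak b) `&` (\bigcup_(s in S) sfrak s) !=set0 <->
  ~ (forall s, S s -> a `&` s <= b).
Proof.
split=> [[y [[ya yb] [s Ss ys]]] asb|].
  by apply: yb; apply: (sfrak_le (asb s Ss) y); rewrite sfrakI.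
move=> /existsNP[s /not_implyP[Ss /prime_filter_separation[y [yas yb]]]].
rewrite sfrakI in yas; case: yas => ya ys.
by exists y; split; [|exists s].
Qed.

Lemma sfrak_sub_pclosure_bigcup S j :
  sfrak j `<=` pclosure (\bigcup_(s in S) sfrak s) <->
  (forall a b, (forall s, S s -> a `&` s <= b) -> a `&` j <= b).
Proof.
split=> [jcl a b asb | least x xj].
  apply/sfrak_subsetE; rewrite sfrakI => x [xa xj]; apply: contrapT => xb.
  by have /basic_meets_bigcup_sfrak := (pclosureP _ _).1 (jcl x xj) a b xa xb.
apply/pclosureP => a b xa xb; apply/basic_meets_bigcup_sfrak => asb.
by apply: xb; apply: (sfrak_le (least a b asb) x); rewrite sfrakI.
Qed.

End Priestley.

Theorem theorem5p16 (disp : Order.disp_t) (A : tbDistrLatticeType disp)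
    (S : set A) (j : A) :
  is_join S j ->
  (distributive_join S j <->
   sfrak j = pclosure (\bigcup_(s in S) sfrak s)).
Proof.
move=> Sj; rewrite distributive_joinP // -sfrak_sub_pclosure_bigcup.
split=> [jcl|-> //]; apply/seteqP; split => //.
by apply: pclosure_sub_sfrak => x [s Ss]; exact: (sfrak_le (Sj.1 s Ss) x).
Qed.
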